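(* For every $n\in\mathbb{N}$, the boolean quadric polytope $\mathrm{BQP}(n)$ is affinely equivalent to some face of the linear ordering polytope $\mathrm{LOP}(2n)$.
   Context: The boolean quadric polytope $\mathrm{BQP}(n)$ is the convex hull of all vectors $\mathbf{x}=(x_{ij})_{1\le i\le j\le n}\in\{0,1\}^{n(n+1)/2}$ satisfying $x_{ij}=x_{ii}x_{jj}$ for all $1\le i<j\le n$. For $m\in\mathbb{N}$, a linear order on $[m]=\{1,\dots,m\}$ is a set $L$ of ordered pairs $(i,j)$, $i\neq j$, such that for each pair $i\neq j$ exactly one of $(i,j),(j,i)$ lies in $L$, and $L$ is transitive ($(i,j),(j,k)\in L\Rightarrow (i,k)\in L$). Its characteristic vector $\mathbf{y}\in\{0,1\}^{m(m-1)/2}$ has coordinates $y_{ij}$, $1\le i<j\le m$, with $y_{ij}=1$ if $(i,j)\in L$ and $y_{ij}=0$ if $(j,i)\in L$. The linear ordering polytope $\mathrm{LOP}(m)$ is the convex hull of all such characteristic vectors. A hyperplane $H$ is supporting for a polytope $P$ if $P\cap H\neq\emptyset$ and $P$ lies entirely on one side of $H$; a face of $P$ is the intersection of $P$ with one or several supporting hyperplanes. Two polytopes $P,Q$ are affinely equivalent if there is an invertible affine map $\alpha$ with $\alpha(P)=Q$ (equivalently, an affine bijection between them). *)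

From HB Require Import structures.
From mathcomp Require Import all_boot all_order all_algebra.
From mathcomp Require Import reals.
Set Implicit Arguments. Unset Strict Implicit. Unset Printing Implicit Defensive.
Import Order.TTheory GRing.Theory Num.Theory.
Local Open Scope ring_scope.

Section Polytopes.
Variable R : realType.

Definition conv (I : finType) (S : (I -> R) -> Prop) : (I -> R) -> Prop :=
  fun x => exists (k : nat) (w : 'I_k -> R) (p : 'I_k -> I -> R),
    (forall t, 0 <= w t) /\ \sum_(t < k) w t = 1 /\ (forall t, S (p t)) /\
    (forall i, x i = \sum_(t < k) w t * p t i).

Definition dotp (I : finType) (a x : I -> R) : R := \sum_(i : I) a i * x i.

(** The hyperplane {x | a.x = c} supports P: it meets P and P lies on one
    side of it (w.l.o.g. the side a.x <= c; the other side is obtained by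
    negating a and c). *)
Definition supporting (I : finType) (P : (I -> R) -> Prop) (a : I -> R) (c : R) :=
  (exists x, P x /\ dotp a x = c) /\ (forall x, P x -> dotp a x <= c).

Definition face (I : finType) (P F : (I -> R) -> Prop) :=
  exists (k : nat) (a : 'I_k -> I -> R) (c : 'I_k -> R),
    (0 < k)%N /\ (forall t, supporting P (a t) (c t)) /\
    (forall x, F x <-> (P x /\ forall t, dotp (a t) x = c t)).

Definition affine_map (I J : finType) (f : (I -> R) -> (J -> R)) :=
  exists (M : J -> I -> R) (b : J -> R),
    forall x j, f x j = \sum_(i : I) M j i * x i + b j.

Definition affinely_equivalent (I J : finType)
    (P : (I -> R) -> Prop) (Q : (J -> R) -> Prop) :=
  exists f : (I -> R) -> (J -> R), affine_map f /\
    (forall x, P x -> Q (f x)) /\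
    (forall y, Q y -> exists x, P x /\ f x = y) /\
    (forall x1 x2, P x1 -> P x2 -> f x1 = f x2 -> x1 = x2).

End Polytopes.

(** Index set {(i,j) : 1 <= i <= j <= n} (0-based here). *)
Definition bqp_index (n : nat) := {p : 'I_n * 'I_n | (p.1 <= p.2)%N}.
Definition bqp_diag (n : nat) (i : 'I_n) : bqp_index n :=
  exist (fun p : 'I_n * 'I_n => (p.1 <= p.2)%N) (i, i) (leqnn i).

Definition lop_index (m : nat) := {p : 'I_m * 'I_m | (p.1 < p.2)%N}.

Section Vertices.
Variable R : realType.

Definition bqp_vertex (n : nat) (x : bqp_index n -> R) : Prop :=
  (forall p, x p = 0 \/ x p = 1) /\
  (forall p : bqp_index n,
      x p = x (bqp_diag (sval p).1) * x (bqp_diag (sval p).2)).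

Definition BQP (n : nat) : (bqp_index n -> R) -> Prop := conv (@bqp_vertex n).

Definition linear_order (m : nat) (L : rel 'I_m) : Prop :=
  (forall i, ~~ L i i) /\
  (forall i j, i != j -> (L i j || L j i) /\ ~~ (L i j && L j i)) /\
  (forall i j k, L i j -> L j k -> L i k).

Definition lop_vertex (m : nat) (y : lop_index m -> R) : Prop :=
  exists L : rel 'I_m, linear_order L /\
    forall p : lop_index m, y p = if L (sval p).1 (sval p).2 then 1 else 0.

Definition LOP (m : nat) : (lop_index m -> R) -> Prop := conv (@lop_vertex m).

End Vertices.

From mathcomp Require Import all_boot all_order all_algebra.
From mathcomp Require Import reals.
From mathcomp Require Import zify lra.
From Stdlib Require Import FunctionalExtensionality.
Set Implicit Arguments. Unset Strict Implicit. Unset Printing Implicit Defensive.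
Import Order.TTheory GRing.Theory Num.Theory.
Local Open Scope ring_scope.

(* The affine map
   x |-> y with [y (i, j) = x_ij - x_jj + 1], [y (n+i, n+j) = x_ij - x_ii + 1]
   for [i < j], [y (i, n+j) = x_ij] for [i <= j] and [y (i, n+j) = 0] for
   [i > j] sends the vertex of BQP(n) of a set [S] to the linear order listing
   first [n+i] for [i \notin S], then [i, n+i] for [i \in S], then [i] for
   [i \notin S].  These orders are exactly the vertices of LOP(2n) satisfying
   with equality, for all [i < j], [y (j, n+i) >= 0] and the 3-cycle
   inequalities on [(i, j, n+j)] and [(i, n+i, n+j)]; so summing these valid
   inequalities cuts out a face whose vertices are the images of those of
   BQP(n).  As [x_ij = y (i, n+j)], the map is injective, hence an affine
   bijection of BQP(n) onto that face. *)

Section BoolIndicators.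
Variable R : realDomainType.

Lemma natr_neg_leif (b : bool) : - (b%:R) <= 0 ?= iff ~~ b :> R.
Proof. by case: b; apply/leifP => /=; rewrite ?oppr0 // oppr_lt0 ltr01. Qed.

Lemma natr_trans_leif (b1 b2 b3 : bool) : b1 && b2 ==> b3 ->
  b1%:R + b2%:R - b3%:R <= 1 ?= iff (b1 || b2) && (b3 == b1 && b2) :> R.
Proof.
case: b1 b2 b3 => [] [] [] //= _; apply/leifP => /=.
all: first [lra | apply/eqP; lra].
Qed.

End BoolIndicators.

Section ConvexHulls.
Variable R : realType.
Implicit Types (I J : finType).

Lemma dotp_comb I (a : I -> R) k (w : 'I_k -> R) (p : 'I_k -> I -> R) x :
  (forall i, x i = \sum_(t < k) w t * p t i) ->
  dotp a x = \sum_(t < k) w t * dotp a (p t).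
Proof.
move=> ex; rewrite /dotp.
under eq_bigr do rewrite ex mulr_sumr.
rewrite exchange_big; apply: eq_bigr => t _.
by rewrite mulr_sumr; apply: eq_bigr => i _; rewrite mulrCA.
Qed.

Lemma conv_point I (S : (I -> R) -> Prop) x : S x -> conv S x.
Proof.
move=> Sx; exists 1%N, (fun _ => 1), (fun _ => x).
split=> [_|]; first exact: ler01.
split; first by rewrite big_ord1.
by split=> // i; rewrite big_ord1 mul1r.
Qed.

Lemma conv_sub I (S T : (I -> R) -> Prop) x :
  (forall v, S v -> T v) -> conv S x -> conv T x.
Proof.
move=> ST [k [w [p [w0 [w1 [Sp ex]]]]]]; exists k, w, p.
by do 2!split=> //; split=> // t; apply: ST.
Qed.

Lemma conv_dotp_le I (S : (I -> R) -> Prop) (a : I -> R) c x :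
  (forall v, S v -> dotp a v <= c) -> conv S x -> dotp a x <= c.
Proof.
move=> Sle [k [w [p [w0 [w1 [Sp /dotp_comb ->]]]]]].
rewrite -[c]mul1r -w1 mulr_suml; apply: ler_sum => t _.
by rewrite ler_wpM2l ?Sle.
Qed.

Lemma conv_dotp_eq I (S : (I -> R) -> Prop) (a : I -> R) c x :
  (forall v, S v -> dotp a v = c) -> conv S x -> dotp a x = c.
Proof.
move=> Seq [k [w [p [w0 [w1 [Sp /dotp_comb ->]]]]]].
by rewrite -[c]mul1r -w1 mulr_suml; apply: eq_bigr => t _; rewrite Seq.
Qed.

Section TightPart.
Variables (I : finType) (S : (I -> R) -> Prop) (a : I -> R) (c : R).
Hypothesis S_le : forall v, S v -> dotp a v <= c.

Definition tight_part v := S v /\ dotp a v = c.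

(* A convex combination attaining [c] puts zero weight on every non-tight
   point; those points are replaced by the tight point [v0]. *)
Lemma conv_tight v0 x : tight_part v0 -> conv S x -> dotp a x = c -> conv tight_part x.
Proof.
move=> Tv0 [k [w [p [w0 [w1 [Sp ex]]]]]] ax.
have gap0 t : w t * (c - dotp a (p t)) = 0.
  have gap_ge0 u : 0 <= w u * (c - dotp a (p u)) by rewrite mulr_ge0 ?subr_ge0 ?S_le.
  apply: (psumr_eq0P (P := xpredT) (fun u _ => gap_ge0 u)) => //.
  under eq_bigr do rewrite mulrBr.
  by rewrite sumrB -mulr_suml w1 mul1r -(dotp_comb _ ex) ax subrr.
exists k, w, (fun t => if dotp a (p t) == c then p t else v0).
do 2!split=> //; split=> [t|i]; first by case: eqP.
rewrite ex; apply: eq_bigr => t _; case: eqP => // /eqP ne.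
have /eqP := gap0 t; rewrite mulf_eq0 subr_eq0 [c == _]eq_sym (negbTE ne) orbF.
by move=> /eqP ->; rewrite !mul0r.
Qed.

Lemma face_conv_tight : (exists v0, tight_part v0) -> face (conv S) (conv tight_part).
Proof.
move=> [v0 Tv0]; exists 1%N, (fun _ => a), (fun _ => c); split=> //; split.
  move=> _; split; last by move=> x; apply: conv_dotp_le.
  by exists v0; split; [apply: conv_point; case: Tv0 | case: Tv0].
move=> x; split=> [Tx | [Sx ax]]; last exact: (conv_tight Tv0 Sx (ax ord0)).
split; first by apply: conv_sub Tx => v [].
by move=> _; apply: conv_dotp_eq Tx => v [].
Qed.

End TightPart.

Section Entries.
Variables (I : finType) (T : eqType) (key : I -> T).

Definition entry (x : I -> R) (t : T) : R := dotp (fun i => (key i == t)%:R) x.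

Lemma entry_key x i : injective key -> entry x (key i) = x i.
Proof.
move=> key_inj; rewrite /entry /dotp (bigD1 i) //= eqxx mul1r big1 ?addr0 // => j ji.
by rewrite (inj_eq key_inj) (negbTE ji) mul0r.
Qed.

Lemma entry_nokey x t : (forall i, key i != t) -> entry x t = 0.
Proof. by move=> nokey; rewrite /entry /dotp big1 // => i _; rewrite (negbTE (nokey i)) mul0r. Qed.

End Entries.

Section AffineMaps.

Definition unitv I (i : I) : I -> R := fun i' => (i' == i)%:R.

Lemma dotp_unitr I (a : I -> R) (i : I) : dotp a (unitv i) = a i.
Proof.
rewrite /dotp (bigD1 i) //= /unitv eqxx mulr1 big1 ?addr0 // => i' /negbTE ->.
by rewrite mulr0.
Qed.

Definition affine_fun I (phi : (I -> R) -> R) :=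
  exists (a : I -> R) (c : R), forall x, phi x = dotp a x + c.

Lemma affine_fun_dotp I (a : I -> R) : affine_fun (dotp a).
Proof. by exists a, 0 => x; rewrite addr0. Qed.

Lemma affine_fun_cst I (c : R) : affine_fun (fun _ : I -> R => c).
Proof.
by exists (fun _ => 0), c => x; rewrite /dotp big1 ?add0r // => i _; rewrite mul0r.
Qed.

Lemma affine_funD I (phi psi : (I -> R) -> R) :
  affine_fun phi -> affine_fun psi -> affine_fun (fun x => phi x + psi x).
Proof.
move=> [a [c phiE]] [b [d psiE]]; exists (fun i => a i + b i), (c + d) => x.
rewrite phiE psiE /dotp addrACA -big_split /=.
by congr (_ + _); apply: eq_bigr => i _; rewrite mulrDl.
Qed.

Lemma affine_funN I (phi : (I -> R) -> R) :
  affine_fun phi -> affine_fun (fun x => - phi x).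
Proof.
move=> [a [c phiE]]; exists (fun i => - a i), (- c) => x.
rewrite phiE /dotp opprD -sumrN; congr (_ + _).
by apply: eq_bigr => i _; rewrite mulNr.
Qed.

Lemma affine_map_coordwise I J (f : (I -> R) -> J -> R) :
  (forall j, affine_fun (fun x => f x j)) -> affine_map f.
Proof.
move=> fA; exists (fun j i => f (unitv i) j - f (fun _ => 0) j), (fun j => f (fun _ => 0) j).
move=> x j; have [a [c fE]] := fA j.
have f0 : f (fun _ => 0) j = c.
  by rewrite fE /dotp big1 ?add0r // => i _; rewrite mulr0.
rewrite f0 fE; congr (_ + _); apply: eq_bigr => i _.
by rewrite fE dotp_unitr addrK.
Qed.

Lemma affine_map_comb I J (f : (I -> R) -> J -> R) k (w : 'I_k -> R) p x :
  affine_map f -> \sum_(t < k) w t = 1 -> (forall i, x i = \sum_(t < k) w t * p t i) ->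
  forall j, f x j = \sum_(t < k) w t * f (p t) j.
Proof.
move=> [M [b fE]] w1 ex j.
have fE' y : f y j = dotp (M j) y + b j by rewrite fE.
rewrite fE' (dotp_comb _ ex); under [RHS]eq_bigr do rewrite fE' mulrDr.
by rewrite big_split /= -mulr_suml w1 mul1r.
Qed.

Lemma conv_affinely_equivalent I J (S : (I -> R) -> Prop) (T : (J -> R) -> Prop)
    (f : (I -> R) -> J -> R) (g : (J -> R) -> I -> R) :
  affine_map f -> cancel f g ->
  (forall x, S x -> T (f x)) -> (forall y, T y -> exists2 x, S x & f x = y) ->
  affinely_equivalent (conv S) (conv T).
Proof.
move=> fA fK ST TS; exists f; split=> //; split.
  move=> x [k [w [p [w0 [w1 [Sp ex]]]]]]; exists k, w, (fun t => f (p t)).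
  by do 2!split=> //; split=> [t|]; [apply: ST | apply: affine_map_comb].
split; last by move=> x1 x2 _ _ /(congr1 g); rewrite !fK.
move=> y [k [w [q [w0 [w1 [Tq ey]]]]]].
have gqK t : S (g (q t)) /\ f (g (q t)) = q t.
  by have [x Sx <-] := TS _ (Tq t); rewrite fK.
exists (fun i => \sum_(t < k) w t * g (q t) i); split.
  by exists k, w, (fun t => g (q t)); do 2!split=> //; split=> // t; case: (gqK t).
apply: functional_extensionality => j; rewrite (affine_map_comb fA w1 (fun i => erefl)) ey.
by apply: eq_bigr => t _; case: (gqK t) => _ ->.
Qed.

End AffineMaps.
End ConvexHulls.

Section Embedding.
Variables (R : realType) (n : nat).
Local Notation m := (2 * n)%N.
Implicit Types (i j : 'I_n) (a b : 'I_m).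

Fact double_n : m = (n + n)%N.
Proof. by rewrite mul2n addnn. Qed.

Definition lo (i : 'I_n) : 'I_m := cast_ord (esym double_n) (lshift n i).
Definition hi (i : 'I_n) : 'I_m := cast_ord (esym double_n) (rshift n i).
Definition side (a : 'I_m) : 'I_n + 'I_n := split (cast_ord double_n a).


Lemma side_lo i : side (lo i) = inl i.
Proof. by rewrite /side cast_ordKV; apply: (unsplitK (inl i)). Qed.

Lemma side_hi i : side (hi i) = inr i.
Proof. by rewrite /side cast_ordKV; apply: (unsplitK (inr i)). Qed.

Variant side_spec : 'I_m -> 'I_n + 'I_n -> Type :=
  | SideLo i : side_spec (lo i) (inl i)
  | SideHi i : side_spec (hi i) (inr i).

Lemma sideP a : side_spec a (side a).
Proof.
rewrite /side; case: splitP => i /= ai.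
  have -> : a = lo i by apply: val_inj.
  exact: SideLo.
have -> : a = hi i by apply: val_inj.
exact: SideHi.
Qed.

Lemma lo_lt_lo i j : (i < j)%N -> (lo i < lo j)%N. Proof. by []. Qed.
Lemma hi_lt_hi i j : (i < j)%N -> (hi i < hi j)%N. Proof. by rewrite /= ltn_add2l. Qed.
Lemma lo_lt_hi i j : (lo i < hi j)%N.
Proof. exact: leq_trans (ltn_ord i) (leq_addr j n). Qed.

Lemma hi_neq_lo i j : hi i != lo j.
Proof. by apply/eqP => /(congr1 val) /=; have := ltn_ord j; lia. Qed.

Definition bqp_entry (x : bqp_index n -> R) (i j : 'I_n) : R := entry (@sval _ _) x (i, j).
Definition lop_entry (y : lop_index m -> R) (a b : 'I_m) : R := entry (@sval _ _) y (a, b).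

Definition bqp_point (s : 'I_n -> bool) : bqp_index n -> R :=
  fun q => (s (sval q).1 && s (sval q).2)%:R.
Definition lop_point (L : rel 'I_m) : lop_index m -> R :=
  fun p => (L (sval p).1 (sval p).2)%:R.

Lemma bqp_entry_point s i j : bqp_entry (bqp_point s) i j = [&& (i <= j)%N, s i & s j]%:R.
Proof.
rewrite /bqp_entry; case: (leqP i j) => ij /=.
  by rewrite (entry_key _ (exist _ (i, j) ij)) //; apply: val_inj.
by rewrite entry_nokey // => -[[i' j'] /= le] ; apply: contraTneq le => -[-> ->]; rewrite -ltnNge.
Qed.

Lemma lop_entry_point L a b : lop_entry (lop_point L) a b = ((a < b)%N && L a b)%:R.
Proof.
rewrite /lop_entry; case: (ltnP a b) => ab /=.
  by rewrite (entry_key _ (exist _ (a, b) ab)) //; apply: val_inj.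
by rewrite entry_nokey // => -[[a' b'] /= lt] ; apply: contraTneq lt => -[-> ->]; rewrite -leqNgt.
Qed.

Lemma bqp_vertexP x : bqp_vertex x <-> exists s, x = bqp_point s.
Proof.
split=> [[x01 xM] | [s ->]].
  exists (fun i => x (bqp_diag i) == 1); apply: functional_extensionality => q.
  rewrite xM /bqp_point.
  by case: (x01 (bqp_diag (sval q).1)) => ->; case: (x01 (bqp_diag (sval q).2)) => ->;
    rewrite ?eqxx ?(eq_sym 0) ?oner_eq0 ?mulr0 ?mul0r ?mulr1.
split=> [q | q]; rewrite /bqp_point /=; first by case: (_ && _); [right | left].
by case: (s (sval q).1); case: (s (sval q).2); rewrite ?mulr0 ?mulr1.
Qed.

Lemma lop_vertexP y : lop_vertex y <-> exists2 L, linear_order L & y = lop_point L.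
Proof.
split=> [[L [linL yL]] | [L linL ->]]; exists L => //.
  by apply: functional_extensionality => p; rewrite yL /lop_point; case: (L _ _).
by split=> // p; rewrite /lop_point; case: (L _ _).
Qed.

(* Used with [X := bqp_entry x], which vanishes for [i > j]: this gives the
   value 0 of [y (i, n+j)] for [i > j]. *)
Definition embed_coord (X : 'I_n -> 'I_n -> R) (u v : 'I_n + 'I_n) : R :=
  match u, v with
  | inl i, inl j => X i j - X j j + 1
  | inr i, inr j => X i j - X i i + 1
  | inl i, inr j => X i j
  | inr _, inl _ => 0
  end.

Definition bqp_to_lop (x : bqp_index n -> R) (p : lop_index m) : R :=
  embed_coord (bqp_entry x) (side (sval p).1) (side (sval p).2).

Definition lop_lohi i j : lop_index m := exist _ (lo i, hi j) (lo_lt_hi i j).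

Definition lop_to_bqp (y : lop_index m -> R) (q : bqp_index n) : R :=
  y (lop_lohi (sval q).1 (sval q).2).

Lemma bqp_to_lop_affine : affine_map bqp_to_lop.
Proof.
apply: affine_map_coordwise => p; rewrite /bqp_to_lop /bqp_entry /entry.
case: (side _) => i; case: (side _) => j /=.
all: repeat first [apply: affine_funD | apply: affine_funN
                  | apply: affine_fun_dotp | apply: affine_fun_cst].
Qed.

Lemma bqp_to_lopK : cancel bqp_to_lop lop_to_bqp.
Proof.
move=> x; apply: functional_extensionality => q.
rewrite /lop_to_bqp /bqp_to_lop /= side_lo side_hi /= /bqp_entry -surjective_pairing.
by rewrite entry_key //; apply: val_inj.
Qed.

(* Ranks: the [hi i] with [~~ s i], then [lo i < hi i] for the [i] with
   [s i], then the [lo i] with [~~ s i], each block in increasing [i]. *)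
Definition cut_key (s : 'I_n -> bool) (u : 'I_n + 'I_n) : nat :=
  match u with
  | inl i => if s i then (2 * n + 2 * i)%N else (4 * n + 2 * i)%N
  | inr i => if s i then (2 * n + 2 * i).+1 else (2 * i).+1
  end.

Definition cut_order s : rel 'I_m := fun a b => (cut_key s (side a) < cut_key s (side b))%N.

Lemma cut_key_inj s : injective (fun a => cut_key s (side a)).
Proof.
move=> a b; case: sideP => i; case: sideP => j /=.
all: have := ltn_ord i; have := ltn_ord j.
all: by case: (s i); case: (s j) => ? ? e; apply: val_inj => /=; lia.
Qed.

Lemma cut_order_linear s : linear_order (cut_order s).
Proof.
rewrite /cut_order; split=> [a|]; first by rewrite ltnn.
split=> [a b ab | a b c]; last exact: ltn_trans.
have /negPf key_ab : cut_key s (side a) != cut_key s (side b).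
  by apply: contra ab => /eqP /cut_key_inj ->.
by case: ltngtP key_ab.
Qed.

(* [cut_order s a b] for [a < b], in terms of [side a] and [side b]. *)
Definition cut_pattern (s : 'I_n -> bool) (u v : 'I_n + 'I_n) : bool :=
  match u, v with
  | inl i, inl j => ~~ s j || s i
  | inr i, inr j => ~~ s i || s j
  | inl i, inr j => [&& (i <= j)%N, s i & s j]
  | inr _, inl _ => false
  end.

Lemma bqp_to_lop_point s p :
  bqp_to_lop (bqp_point s) p = (cut_pattern s (side (sval p).1) (side (sval p).2))%:R.
Proof.
case: p => -[a b] /=; rewrite /bqp_to_lop /=.
case: sideP => i; case: sideP => j /= ab.
- rewrite !bqp_entry_point leqnn (ltnW ab).
  by case: (s i); case: (s j); rewrite /= ?subrr ?add0r ?addrK ?addNr.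
- by rewrite bqp_entry_point.
- by have := ltn_ord j; lia.
- rewrite ltn_add2l in ab; rewrite !bqp_entry_point leqnn (ltnW ab).
  by case: (s i); case: (s j); rewrite /= ?subrr ?add0r ?addrK ?addNr.
Qed.

Lemma cut_order_pattern s a b :
  (a < b)%N -> cut_order s a b = cut_pattern s (side a) (side b).
Proof.
rewrite /cut_order; case: sideP => i; case: sideP => j /=.
all: have := ltn_ord i; have := ltn_ord j.
all: case: (s i); case: (s j) => /= ? ? ab; lia.
Qed.

(* For [i < j]: the nonnegativity of [y (j, n+i)] and the 3-cycle
   inequalities on [(i, j, n+j)] and [(i, n+i, n+j)]. *)
Definition face_term (Y : 'I_m -> 'I_m -> R) i j : R :=
  - Y (lo j) (hi i)
  + (Y (lo i) (lo j) + Y (lo j) (hi j) - Y (lo i) (hi j))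
  + (Y (lo i) (hi i) + Y (hi i) (hi j) - Y (lo i) (hi j)).

Definition face_normal (p : lop_index m) : R :=
  \sum_(ij : 'I_n * 'I_n | (ij.1 < ij.2)%N)
    face_term (fun a b => (sval p == (a, b))%:R) ij.1 ij.2.

Definition face_rhs : R := \sum_(ij : 'I_n * 'I_n | (ij.1 < ij.2)%N) 2.

Lemma dotp_face_normal y :
  dotp face_normal y = \sum_(ij : 'I_n * 'I_n | (ij.1 < ij.2)%N) face_term (lop_entry y) ij.1 ij.2.
Proof.
rewrite /dotp; under eq_bigr do rewrite mulr_suml.
rewrite exchange_big; apply: eq_bigr => -[i j] _.
rewrite /face_term /lop_entry /entry /dotp.
under eq_bigr do rewrite !mulrDl !mulNr.
by rewrite !big_split /= !sumrN.
Qed.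

Definition face_tight (L : rel 'I_m) i j : bool :=
  [&& ~~ L (lo j) (hi i),
      (L (lo i) (lo j) || L (lo j) (hi j))
        && (L (lo i) (hi j) == L (lo i) (lo j) && L (lo j) (hi j))
    & (L (lo i) (hi i) || L (hi i) (hi j))
        && (L (lo i) (hi j) == L (lo i) (hi i) && L (hi i) (hi j))].

Section LinearOrder.
Variable L : rel 'I_m.
Hypothesis L_linear : linear_order L.

Lemma linear_order_trans a b c : L a b -> L b c -> L a c.
Proof. by case: L_linear => _ [_]; apply. Qed.

Lemma linear_order_total a b : a != b -> L a b || L b a.
Proof. by case: L_linear => _ [+ _] => /[apply] -[]. Qed.

Lemma face_term_leif i j : (i < j)%N ->
  face_term (lop_entry (lop_point L)) i j <= 2 ?= iff face_tight L i j.
Proof.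
move=> ij; rewrite /face_term !lop_entry_point !lo_lt_hi (lo_lt_lo ij) (hi_lt_hi ij) /=.
have trans3 a b c : L a b && L b c ==> L a c.
  by apply/implyP => /andP[]; apply: linear_order_trans.
have := leifD (leifD (natr_neg_leif R (L (lo j) (hi i)))
                     (natr_trans_leif R (trans3 (lo i) (lo j) (hi j))))
              (natr_trans_leif R (trans3 (lo i) (hi i) (hi j))).
by rewrite add0r -andbA.
Qed.

Lemma face_normal_leif :
  dotp face_normal (lop_point L) <= face_rhs
    ?= iff [forall ij : 'I_n * 'I_n, (ij.1 < ij.2)%N ==> face_tight L ij.1 ij.2].
Proof. by rewrite dotp_face_normal; apply: leif_sum => -[i j] /= /face_term_leif. Qed.

Lemma lop_point_tight :
  dotp face_normal (lop_point L) = face_rhs <-> forall i j, (i < j)%N -> face_tight L i j.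
Proof.
have eq_tight := eq_leif face_normal_leif; split=> [e i j ij | tight].
  by move: eq_tight; rewrite e eqxx => /esym/forallP/(_ (i, j))/implyP; apply.
by apply/eqP; rewrite eq_tight; apply/forallP => -[i j]; apply/implyP/tight.
Qed.

Section TightOrder.
Hypothesis L_tight : forall i j, (i < j)%N -> face_tight L i j.

Lemma tight_lo_hi_gt i j : (i < j)%N -> L (lo j) (hi i) = false.
Proof. by move=> /L_tight /and3P[/negPf]. Qed.

Lemma tight_lo_hi i j : (i < j)%N -> L (lo i) (hi j) = L (lo i) (hi i) && L (lo j) (hi j).
Proof.
move=> ij; have /and3P[_ /andP[_ /eqP via_lo] /andP[_ /eqP via_hi]] := L_tight ij.
case si: (L (lo i) (hi i)); last by rewrite via_hi si.
case sj: (L (lo j) (hi j)); last by rewrite via_lo sj andbF.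
have hi_lo : L (hi i) (lo j).
  by have := linear_order_total (hi_neq_lo i j); rewrite tight_lo_hi_gt ?orbF.
exact: linear_order_trans (linear_order_trans si hi_lo) sj.
Qed.

Lemma tight_lo_lo i j : (i < j)%N -> L (lo i) (lo j) = ~~ L (lo j) (hi j) || L (lo i) (hi i).
Proof.
move=> ij; have /and3P[_ /andP[or_lo /eqP via_lo] _] := L_tight ij.
case sj: (L (lo j) (hi j)); last by move: or_lo; rewrite sj orbF.
by move: via_lo; rewrite tight_lo_hi // sj !andbT => ->.
Qed.

Lemma tight_hi_hi i j : (i < j)%N -> L (hi i) (hi j) = ~~ L (lo i) (hi i) || L (lo j) (hi j).
Proof.
move=> ij; have /and3P[_ _ /andP[or_hi /eqP via_hi]] := L_tight ij.
case si: (L (lo i) (hi i)); last by move: or_hi; rewrite si.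
by move: via_hi; rewrite tight_lo_hi // si /= => ->.
Qed.

Lemma tight_pattern a b :
  (a < b)%N -> L a b = cut_pattern (fun i => L (lo i) (hi i)) (side a) (side b).
Proof.
case: sideP => i; case: sideP => j /= ab.
- exact: tight_lo_lo.
- case: ltngtP => [ij | ji | /val_inj <-] /=; last by rewrite andbb.
    exact: tight_lo_hi.
  exact: tight_lo_hi_gt.
- by have := ltn_ord j; lia.
- by rewrite ltn_add2l in ab; apply: tight_hi_hi.
Qed.

End TightOrder.

Lemma tight_lop_point :
  dotp face_normal (lop_point L) = face_rhs ->
  lop_point L = bqp_to_lop (bqp_point (fun i => L (lo i) (hi i))).
Proof.
move=> /lop_point_tight tight; apply: functional_extensionality => -[[a b] ab].
by rewrite bqp_to_lop_point /lop_point /= -tight_pattern.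
Qed.

End LinearOrder.

Lemma bqp_to_lop_cut s : bqp_to_lop (bqp_point s) = lop_point (cut_order s).
Proof.
apply: functional_extensionality => -[[a b] ab].
by rewrite bqp_to_lop_point /lop_point /= cut_order_pattern.
Qed.

Lemma cut_order_tight s : dotp face_normal (lop_point (cut_order s)) = face_rhs.
Proof.
apply/(lop_point_tight (cut_order_linear s)) => i j ij.
rewrite /face_tight !(cut_order_pattern s (lo_lt_hi _ _)).
rewrite (cut_order_pattern s (lo_lt_lo ij)) (cut_order_pattern s (hi_lt_hi ij)).
rewrite !side_lo !side_hi /= leqNgt ij (ltnW ij) !leqnn.
by case: (s i); case: (s j).
Qed.

Lemma lop_vertex_face_le y : lop_vertex y -> dotp face_normal y <= face_rhs.
Proof.
by move=> /lop_vertexP[L L_linear ->]; apply: Order.le_of_leif (face_normal_leif L_linear).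
Qed.

Lemma bqp_to_lop_vertex s :
  tight_part (@lop_vertex R m) face_normal face_rhs (bqp_to_lop (bqp_point s)).
Proof.
rewrite bqp_to_lop_cut; split; last exact: cut_order_tight.
by apply/lop_vertexP; exists (cut_order s) => //; apply: cut_order_linear.
Qed.

End Embedding.

Theorem theorem1 (R : realType) (n : nat) :
  exists F : (lop_index (2 * n) -> R) -> Prop,
    face (@LOP R (2 * n)) F /\ affinely_equivalent (@BQP R n) F.
Proof.
exists (conv (tight_part (@lop_vertex R _) (@face_normal R n) (face_rhs R n))); split.
  apply: face_conv_tight; first exact: lop_vertex_face_le.
  by exists (bqp_to_lop (bqp_point R xpred0)); apply: bqp_to_lop_vertex.
apply: (conv_affinely_equivalent (bqp_to_lop_affine R n) (@bqp_to_lopK R n)).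
  by move=> x /bqp_vertexP[s ->]; apply: bqp_to_lop_vertex.
move=> y [/lop_vertexP[L L_linear ->] tight].
exists (bqp_point R (fun i => L (lo i) (hi i))); last by rewrite -tight_lop_point.
by apply/bqp_vertexP; exists (fun i => L (lo i) (hi i)).
Qed.
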